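(* Let $p$ be a prime, $q=p^r$, and let $l$ be an integer with $1\le l\le 2r-1$. If there is a power of two which divides $r$ but does not divide $l$, then every root of the equation $X^{1+p^l}+1=0$ in $\mathrm{GF}(q^2)$ lies in $\mathrm{GF}(q)$; equivalently, $\alpha^{1+p^l}+\beta^{1+p^l}\neq0$ for every basis $\{\alpha,\beta\}$ of $\mathrm{GF}(q^2)$ over $\mathrm{GF}(q)$. *)

From HB Require Import structures.
From mathcomp Require Import all_boot all_order all_algebra all_field.
Set Implicit Arguments. Unset Strict Implicit. Unset Printing Implicit Defensive.
Import GRing.Theory.
Local Open Scope ring_scope.

Definition in_GFq (F : finFieldType) (q : nat) (x : F) : bool := x ^+ q == x.

(* {a, b} is a basis of F over GF(q) (F of order q^2): a and b are linearly
   independent over GF(q) (two independent vectors in a 2-dimensional space). *)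
Definition GFq_basis (F : finFieldType) (q : nat) (a b : F) : Prop :=
  forall c d : F, in_GFq q c -> in_GFq q d -> c * a + d * b = 0 -> c = 0 /\ d = 0.

From HB Require Import structures.
From mathcomp Require Import all_boot all_order all_algebra all_field.
Set Implicit Arguments. Unset Strict Implicit. Unset Printing Implicit Defensive.
Import GRing.Theory.
Local Open Scope ring_scope.

(* A root x of X^(1+p^l) + 1 satisfies x^(p^l) = -1/x, so it is fixed by the
   p^(2l)-power Frobenius; being in GF(p^(2r)), it is also fixed by the
   p^(2r)-power one, hence by the p^(2 gcd(l,r))-power one.  The 2-adic
   hypothesis says exactly that 2 gcd(l,r) divides r, so x is in GF(p^r).
   For a basis {a, b} with a^(1+p^l) + b^(1+p^l) = 0, the ratio a/b would be
   such a root, making a and b dependent over GF(p^r). *)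

Lemma dvdn_double_gcd (l r k : nat) :
  (2 ^ k %| r)%N -> ~~ (2 ^ k %| l)%N -> (2 * gcdn l r %| r)%N.
Proof.
move=> k_dvd_r k_ndvd_l.
have l_gt0 : (0 < l)%N by rewrite lt0n; apply: contraNneq k_ndvd_l => ->.
have g_gt0 : (0 < gcdn l r)%N by rewrite gcdn_gt0 l_gt0.
have r_eq : r = (gcdn l r * (r %/ gcdn l r))%N by rewrite mulnC divnK // dvdn_gcdr.
rewrite [X in (_ %| X)%N]r_eq (mulnC 2) dvdn_pmul2l // dvdn2.
apply: contra k_ndvd_l => odd_quot.
apply: dvdn_trans (dvdn_gcdl l r).
have coprime_quot : coprime (2 ^ k) (r %/ gcdn l r) by rewrite coprimeXl // coprime2n odd_quot.
by rewrite -(Gauss_dvdr _ coprime_quot) mulnC -r_eq.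
Qed.

Section IteratedPowerFixpoints.
Variables (R : pzSemiRingType) (e : nat).

Lemma expr_expnM_fixed (x : R) m t :
  x ^+ (e ^ m) = x -> x ^+ (e ^ (m * t)) = x.
Proof.
move=> fix_m; elim: t => [|t IHt]; first by rewrite muln0 expn0 expr1.
by rewrite mulnS expnD exprM fix_m IHt.
Qed.

Lemma expr_expn_gcd_fixed (x : R) m n :
  x ^+ (e ^ m) = x -> x ^+ (e ^ n) = x -> x ^+ (e ^ gcdn m n) = x.
Proof.
case: (posnP m) => [-> _ fix_n | m_gt0 fix_m fix_n]; first by rewrite gcd0n.
case: (egcdnP n m_gt0) => u v bezout _.
have := expr_expnM_fixed u fix_m.
by rewrite mulnC bezout expnD exprM mulnC (expr_expnM_fixed v fix_n).
Qed.

End IteratedPowerFixpoints.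

Lemma GFq_basis_neq0r (F : finFieldType) (q : nat) (a b : F) :
  (0 < q)%N -> GFq_basis q a b -> b != 0.
Proof.
move=> q_gt0 basis_ab; apply/eqP => b0.
have in0 : in_GFq q (0 : F) by rewrite /in_GFq expr0n eqn0Ngt q_gt0.
have in1 : in_GFq q (1 : F) by rewrite /in_GFq expr1n.
have trivial_comb : 0 * a + 1 * b = 0 by rewrite b0 mul0r mulr0 addr0.
by have [_ /eqP] := basis_ab 0 1 in0 in1 trivial_comb; rewrite oner_eq0.
Qed.

Lemma GFq_basis_ratioN (F : finFieldType) (q : nat) (a b : F) :
  GFq_basis q a b -> b != 0 -> ~~ in_GFq q (- (a / b)).
Proof.
move=> basis_ab b_neq0; apply/negP => in_ratio.
have in1 : in_GFq q (1 : F) by rewrite /in_GFq expr1n.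
have dependence : 1 * a + - (a / b) * b = 0 by rewrite mul1r mulNr divfK // subrr.
by have [/eqP] := basis_ab 1 _ in1 in_ratio dependence; rewrite oner_eq0.
Qed.

Section FrobeniusCharP.
Variables (F : finFieldType) (p : nat).
Hypothesis pcharFp : p \in [pchar F].

Lemma exprN_expn (x : F) n : (- x) ^+ (p ^ n) = - x ^+ (p ^ n).
Proof. by apply: exprNn_pchar; rewrite pnatX (pnatE _ (pcharf_prime pcharFp)) pcharFp. Qed.

Lemma in_GFqN (x : F) n : in_GFq (p ^ n) (- x) = in_GFq (p ^ n) x.
Proof. by rewrite /in_GFq exprN_expn eqr_opp. Qed.

Lemma expr_expn_double_fixed (x : F) l :
  x ^+ (1 + p ^ l) = -1 -> x ^+ (p ^ (2 * l)) = x.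
Proof.
move=> root_x.
have x_neq0 : x != 0.
  by apply: contra_eq_neq root_x => ->; rewrite expr0n /= eq_sym oppr_eq0 oner_neq0.
have frob_x : x ^+ (p ^ l) = - x^-1.
  by apply: (mulfI x_neq0); rewrite -exprS root_x mulrN mulfV.
by rewrite mul2n -addnn expnD exprM frob_x exprN_expn exprVn frob_x invrN invrK opprK.
Qed.

Lemma root_in_GFq (r l k : nat) (x : F) :
  #|F| = ((p ^ r) ^ 2)%N -> (2 ^ k %| r)%N -> ~~ (2 ^ k %| l)%N ->
  x ^+ (1 + p ^ l) = -1 -> in_GFq (p ^ r) x.
Proof.
move=> cardF k_dvd_r k_ndvd_l root_x.
have fix_2r : x ^+ (p ^ (2 * r)) = x by rewrite mulnC expnM -cardF expf_card.
have fix_gcd : x ^+ (p ^ (2 * gcdn l r)) = x.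
  by rewrite muln_gcdr; exact: expr_expn_gcd_fixed (expr_expn_double_fixed root_x) fix_2r.
have [t ->] := dvdnP (dvdn_double_gcd k_dvd_r k_ndvd_l).
by rewrite /in_GFq mulnC (expr_expnM_fixed t fix_gcd).
Qed.

End FrobeniusCharP.

Theorem proposition6 (F : finFieldType) (p r l : nat) :
  prime p -> p \in [pchar F] -> #|F| = ((p ^ r) ^ 2)%N ->
  (1 <= l <= (2 * r).-1)%N ->
  (exists k : nat, (2 ^ k %| r)%N /\ ~~ (2 ^ k %| l)%N) ->
  (forall x : F, x ^+ (1 + p ^ l) + 1 = 0 -> in_GFq (p ^ r) x) /\
  (forall a b : F, GFq_basis (p ^ r) a b -> a ^+ (1 + p ^ l) + b ^+ (1 + p ^ l) != 0).
Proof.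
move=> p_prime pcharFp cardF _ [k [k_dvd_r k_ndvd_l]].
have roots_in_GFq (x : F) : x ^+ (1 + p ^ l) + 1 = 0 -> in_GFq (p ^ r) x.
  by move/eqP; rewrite addr_eq0 => /eqP /(root_in_GFq pcharFp cardF k_dvd_r k_ndvd_l).
split=> // a b basis_ab; apply/negP; rewrite addr_eq0 => /eqP sum0.
have q_gt0 : (0 < p ^ r)%N by rewrite expn_gt0 prime_gt0.
have b_neq0 := GFq_basis_neq0r q_gt0 basis_ab.
have root_ratio : (a / b) ^+ (1 + p ^ l) + 1 = 0.
  by rewrite expr_div_n sum0 mulNr mulfV ?expf_neq0 // addNr.
have := GFq_basis_ratioN basis_ab b_neq0.
by rewrite (in_GFqN pcharFp) (roots_in_GFq _ root_ratio).
Qed.
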